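(* Let $k$ be a positive integer and $G$ a finite, simple, undirected, connected graph of order $n\ge2$. (a) If $O_{R,k}(G)=\mathcal{M}$, then $\dim_k(G)\le M_{R,k}(G)\le M'_{R,k}(G)\le\lfloor n/2\rfloor$, $M_{R,k+1}(G)\le M_{R,k}(G)$ and $M'_{R,k+1}(G)\le M'_{R,k}(G)$. (b) If $O_{R,k}(G)=\mathcal{B}$, then $B'_{R,k}(G)\le B_{R,k}(G)\le\lfloor n/2\rfloor$; moreover, for $k>1$, $B_{R,k}(G)\ge B_{R,k-1}(G)$ and $B'_{R,k}(G)\ge B'_{R,k-1}(G)$. (c) If $\mathrm{diam}(G)\in\{1,2\}$ or $k\ge\mathrm{diam}(G)-1$, then $M_{R,k}(G)=M_R(G)$ and $M'_{R,k}(G)=M'_R(G)$ if $O_R(G)=\mathcal{M}$, and $B_{R,k}(G)=B_R(G)$ and $B'_{R,k}(G)=B'_R(G)$ if $O_R(G)=\mathcal{B}$. (d) If $X$ is a pairing distance-$k$ resolving set of $G$ with $|\bigcup X|=2\dim_k(G)$, then $M_{R,k}(G)=M'_{R,k}(G)=\dim_k(G)$. (e) If $X$ is a quasi-pairing distance-$k$ resolving set of $G$ with $|\bigcup X|=2(\dim_k(G)-1)$ and $O_{R,k}(G)=\mathcal{N}$, then $N_{R,k}(G)=\dim_k(G)$.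
   Context: $d$ is the shortest-path distance, $\mathrm{diam}(G)$ the diameter, and $d_k(x,y)=\min\{d(x,y),k+1\}$. A set $S\subseteq V(G)$ is a distance-$k$ resolving set if for all distinct $x,y$ some $z\in S$ has $d_k(x,z)\ne d_k(y,z)$ (a resolving set if this holds with $d$); $\dim_k(G)$ is the minimum size of a distance-$k$ resolving set. In the Maker-Breaker distance-$k$ resolving game (MB$k$RG), Maker and Breaker alternately select a not-yet-chosen vertex; Maker wins if his selected vertices form a distance-$k$ resolving set, Breaker wins otherwise; in the $M$-game ($B$-game) Maker (Breaker) moves first. $O_{R,k}(G)=\mathcal{M}$ if Maker wins both games, $\mathcal{B}$ if Breaker wins both, $\mathcal{N}$ if the first player wins. The Maker-Breaker resolving game and its outcome $O_R(G)$ are defined the same way with resolving sets. If $O_{R,k}(G)=\mathcal{M}$, $M_{R,k}(G)$ ($M'_{R,k}(G)$) is the minimum number of moves Maker needs to win the $M$-game ($B$-game); if $O_{R,k}(G)=\mathcal{B}$, $B_{R,k}(G)$ ($B'_{R,k}(G)$) is the minimum number of moves Breaker needs to win the $M$-game ($B$-game); if $O_{R,k}(G)=\mathcal{N}$, $N_{R,k}(G)$ is the minimum number of moves for the first player (Maker) to win the $M$-game. $M_R,M'_R,B_R,B'_R$ are defined analogously for the resolving game. For a positive integer $\alpha$ and a family $X=\{\{u_1,w_1\},\dots,\{u_\alpha,w_\alpha\}\}$ of pairwise disjoint 2-subsets of $V(G)$, a transversal is a set $Z$ of size $\alpha$ meeting every $\{u_i,w_i\}$. $X$ is a pairing distance-$k$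 resolving set if every transversal is a distance-$k$ resolving set; $X$ is a quasi-pairing distance-$k$ resolving set if no transversal is a distance-$k$ resolving set but some $v\in V(G)-\bigcup X$ makes $Z\cup\{v\}$ a distance-$k$ resolving set for every transversal $Z$. *)

From mathcomp Require Import all_boot.
From Stdlib Require Import ClassicalEpsilon.

Set Implicit Arguments.
Unset Strict Implicit.
Unset Printing Implicit Defensive.

(* The least natural number satisfying P (unspecified if none exists). *)
Definition nat_min (P : nat -> Prop) : nat :=
  epsilon (inhabits 0%N) (fun n => P n /\ forall m, P m -> n <= m).

Section Graph.
Variables (T : finType) (e : rel T).

Definition dist (x y : T) : nat :=
  nat_min (fun n => exists p : seq T, [/\ path e x p, last x p = y & size p = n]).

Definition diam : nat := \max_(x : T) \max_(y : T) dist x y.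

Definition dist_k (k : nat) (x y : T) : nat := minn (dist x y) k.+1.

Definition resolving_by (f : T -> T -> nat) (W : {set T}) : Prop :=
  forall x y : T, x <> y -> exists2 z, z \in W & f x z <> f y z.

Definition resolving (W : {set T}) : Prop := resolving_by dist W.
Definition k_resolving (k : nat) (W : {set T}) : Prop := resolving_by (dist_k k) W.

Definition dim_k (k : nat) : nat :=
  nat_min (fun m => exists W : {set T}, k_resolving k W /\ #|W| = m).

End Graph.

(* Maker-Breaker game on a finite vertex set T with winning family S for Maker
   (S is superset-closed in our applications).  State: Maker's set M,
   Breaker's set B, and a flag [true] = Maker to move.
   [MW S m M B t]: Maker can force that his set satisfies S using at most m
   further Maker moves. *)
Section Game.
Variables (T : finType) (S : {set T} -> Prop).

Inductive MW : nat -> {set T} -> {set T} -> bool -> Prop :=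
| MW_done m M B t : S M -> MW m M B t
| MW_maker m M B v : v \notin M :|: B -> MW m (v |: M) B false -> MW m.+1 M B true
| MW_breaker m M B : (exists v, v \notin M :|: B) ->
    (forall v, v \notin M :|: B -> MW m M (v |: B) true) -> MW m M B false.

(* [BW S m M B t]: Breaker can force, using at most m further Breaker moves,
   that Maker can no longer win, i.e. the vertices not taken by Breaker
   (Maker's vertices plus the free ones) do not satisfy S. *)
Inductive BW : nat -> {set T} -> {set T} -> bool -> Prop :=
| BW_done m M B t : ~ S (~: B) -> BW m M B t
| BW_breaker m M B v : v \notin M :|: B -> BW m M (v |: B) true -> BW m.+1 M B false
| BW_maker m M B : (exists v, v \notin M :|: B) ->
    (forall v, v \notin M :|: B -> BW m (v |: M) B false) -> BW m M B true.

(* M-game: Maker moves first; B-game: Breaker moves first. *)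
Definition maker_wins_Mgame := exists m, MW m set0 set0 true.
Definition maker_wins_Bgame := exists m, MW m set0 set0 false.
Definition breaker_wins_Mgame := exists m, BW m set0 set0 true.
Definition breaker_wins_Bgame := exists m, BW m set0 set0 false.

Definition outcome_M := maker_wins_Mgame /\ maker_wins_Bgame.
Definition outcome_B := breaker_wins_Mgame /\ breaker_wins_Bgame.
Definition outcome_N := maker_wins_Mgame /\ breaker_wins_Bgame.

Definition M_moves : nat := nat_min (fun m => MW m set0 set0 true).
Definition M'_moves : nat := nat_min (fun m => MW m set0 set0 false).
Definition B_moves : nat := nat_min (fun m => BW m set0 set0 true).
Definition B'_moves : nat := nat_min (fun m => BW m set0 set0 false).
(* N-outcome: minimum number of moves of the first player (Maker) in the M-game *)
Definition N_moves : nat := nat_min (fun m => MW m set0 set0 true).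

End Game.

Section Pairing.
Variables (T : finType).

Definition pair_family (X : {set {set T}}) : Prop :=
  0 < #|X| /\ trivIset X /\ forall P, P \in X -> #|P| = 2.

Definition transversal (X : {set {set T}}) (Z : {set T}) : Prop :=
  #|Z| = #|X| /\ forall P, P \in X -> Z :&: P != set0.

Definition pairing_res (S : {set T} -> Prop) (X : {set {set T}}) : Prop :=
  pair_family X /\ forall Z, transversal X Z -> S Z.

Definition quasi_pairing_res (S : {set T} -> Prop) (X : {set {set T}}) : Prop :=
  [/\ pair_family X, (forall Z, transversal X Z -> ~ S Z) &
      exists2 v, v \notin cover X & forall Z, transversal X Z -> S (v |: Z)].

End Pairing.

(* A move count is the least budget with which a player can force a win, so the
   inequalities come from transferring winning strategies.  Winning sets for
   d_k stay winning for d_(k+1), so Maker's strategies improve and Breaker's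
   deteriorate as k grows; moving first never hurts (in the B-game Maker may
   ignore Breaker's first vertex); each player gets at most half of the n
   vertices; and d_k = d as soon as k + 1 >= diam G.  For (d) and (e) Maker
   answers every Breaker move inside a pair by the partner vertex, and
   otherwise claims some untouched pair: after |X| answers he owns a
   transversal.  Since a winning set has at least dim_k vertices, the bound
   |X| = dim_k (resp. |X| + 1 = dim_k) is attained. *)

From Pilot Require Import Defs.
From Stdlib Require Import ClassicalEpsilon FunctionalExtensionality.
From mathcomp Require Import all_boot zify.

Set Implicit Arguments.
Unset Strict Implicit.
Unset Printing Implicit Defensive.

Section NatMin.
Variable P : nat -> Prop.

Lemma nat_minP : (exists n, P n) -> P (nat_min P) /\ forall m, P m -> nat_min P <= m.
Proof.
move=> [n Pn]; apply: (epsilon_spec (inhabits 0) (fun n => P n /\ _)).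
pose p m : bool := excluded_middle_informative (P m).
have pP m : reflect (P m) (p m) by exact: sumboolP.
have [m /pP Pm min_m] := ex_minnP (ex_intro p n (introT (pP n) Pn)).
by exists m; split=> // m' /pP; apply: min_m.
Qed.

Lemma nat_min_le m : P m -> nat_min P <= m.
Proof. by move=> Pm; have [_] := nat_minP (ex_intro _ m Pm); apply. Qed.

End NatMin.

Lemma nat_min_leW (P Q : nat -> Prop) :
  (forall m, Q m -> exists2 n, P n & n <= m) -> (exists m, Q m) ->
  nat_min P <= nat_min Q.
Proof.
move=> QP /nat_minP[/QP[n Pn le_n] _].
exact: leq_trans (nat_min_le Pn) le_n.
Qed.

Lemma nat_min_sub (P Q : nat -> Prop) :
  (forall m, Q m -> P m) -> (exists m, Q m) -> nat_min P <= nat_min Q.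
Proof. by move=> QP; apply: nat_min_leW => m /QP Pm; exists m. Qed.

Section MakerBreaker.
Variables (T : finType) (S : {set T} -> Prop).
Implicit Types (M B : {set T}) (m : nat) (t : bool).

Lemma card_setC_setU1 (A : {set T}) v : v \notin A -> #|~: (v |: A)|.+1 = #|~: A|.
Proof.
by move=> vA; have := cardsC A; have := cardsC (v |: A); rewrite cardsU1 (negPf vA); lia.
Qed.

Lemma MW_weaken (S' : {set T} -> Prop) m M B t :
  (forall W, S W -> S' W) -> MW S m M B t -> MW S' m M B t.
Proof.
move=> SS'; elim=> {m M B t} [m M B t /SS'|m M B v vMB _|m M B ex _].
- exact: MW_done.
- exact: MW_maker.
- exact: MW_breaker.
Qed.

Lemma MW_leq m n M B t : m <= n -> MW S m M B t -> MW S n M B t.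
Proof.
move=> le_mn W; elim: W n le_mn => {m M B t} [m M B t SM|m M B v vMB _ IH|m M B ex _ IH] n.
- by move=> _; apply: MW_done.
- by case: n => // n le_mn; apply: MW_maker vMB (IH n le_mn).
- by move=> le_mn; apply: MW_breaker ex _ => v vMB; apply: IH.
Qed.

Lemma MW_card m M B t : MW S m M B t -> exists2 W, S W & #|W| <= #|M| + m.
Proof.
elim=> {m M B t} [m M B t SM|m M B v _ _ [W SW leW]|m M B [v vMB] _ IH].
- by exists M => //; apply: leq_addr.
- by exists W => //; apply: leq_trans leW _; rewrite cardsU1; case: (v \in M); lia.
- exact: IH vMB.
Qed.

Lemma MW_subB m M B B' t : B' \subset B -> MW S m M B t -> MW S m M B' t.
Proof.
move=> sB W; elim: W B' sB => {m M B t} [m M B t SM|m M B v vMB _ IH|m M B [u uMB] _ IH] B' sB.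
- exact: MW_done.
- have sMB := setUS M sB.
  by apply: MW_maker (IH _ sB); apply: contra vMB => /(subsetP sMB).
- have sMB := setUS M sB.
  apply: MW_breaker => [|w wMB']; first by exists u; apply: contra uMB => /(subsetP sMB).
  have [wB|wB] := boolP (w \in B).
    by apply: (IH u uMB); rewrite subUset sub1set !inE wB orbT (subset_trans sB) ?subsetUr.
  have wMB : w \notin M :|: B.
    by move: wMB'; rewrite !inE !negb_or wB andbT => /andP[].
  exact: IH wMB _ (setUS _ sB).
Qed.

Lemma MW_move_first m M B : MW S m M B false -> MW S m M B true.
Proof.
move E : false => t W; case: W E => // [m' M' B' t' SM _|m' M' B' [v vMB] W _].
- exact: MW_done.
- exact: MW_subB (subsetUr _ _) (W v vMB).
Qed.

Lemma MW_half m M B t : MW S m M B t -> MW S ((#|~: (M :|: B)| + t) %/ 2) M B t.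
Proof.
elim=> {m M B t} [m M B t SM|m M B v vMB _ IH|m M B [u uMB] _ IH]; first exact: MW_done.
- rewrite -setUA in IH; apply: MW_leq (MW_maker vMB IH).
  by have := card_setC_setU1 vMB; rewrite /=; lia.
- apply: MW_breaker => [|v vMB]; first by exists u.
  have := IH v vMB; rewrite setUCA; apply: MW_leq.
  by have := card_setC_setU1 vMB; rewrite /=; lia.
Qed.

Lemma BW_weaken (S' : {set T} -> Prop) m M B t :
  (forall W, S' W -> S W) -> BW S m M B t -> BW S' m M B t.
Proof.
move=> S'S; elim=> {m M B t} [m M B t nSB|m M B v vMB _|m M B ex _].
- by apply: BW_done => /S'S.
- exact: BW_breaker.
- exact: BW_maker.
Qed.

Lemma BW_leq m n M B t : m <= n -> BW S m M B t -> BW S n M B t.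
Proof.
move=> le_mn W; elim: W n le_mn => {m M B t} [m M B t nSB|m M B v vMB _ IH|m M B ex _ IH] n.
- by move=> _; apply: BW_done.
- by case: n => // n le_mn; apply: BW_breaker vMB (IH n le_mn).
- by move=> le_mn; apply: BW_maker ex _ => v vMB; apply: IH.
Qed.

Lemma BW_subM m M M' B t : M' \subset M -> BW S m M B t -> BW S m M' B t.
Proof.
move=> sM W; elim: W M' sM => {m M B t} [m M B t nSB|m M B v vMB _ IH|m M B [u uMB] _ IH] M' sM.
- exact: BW_done.
- have sMB := setSU B sM.
  by apply: BW_breaker (IH _ sM); apply: contra vMB => /(subsetP sMB).
- have sMB := setSU B sM.
  apply: BW_maker => [|w wMB']; first by exists u; apply: contra uMB => /(subsetP sMB).
  have [wM|wM] := boolP (w \in M).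
    by apply: (IH u uMB); rewrite subUset sub1set !inE wM orbT (subset_trans sM) ?subsetUr.
  have wMB : w \notin M :|: B.
    by move: wMB'; rewrite !inE !negb_or wM => /andP[].
  exact: IH wMB _ (setUS _ sM).
Qed.

Lemma BW_move_first m M B : BW S m M B true -> BW S m M B false.
Proof.
move E : true => t W; case: W E => // [m' M' B' t' nSB _|m' M' B' [v vMB] W _].
- exact: BW_done.
- exact: BW_subM (subsetUr _ _) (W v vMB).
Qed.

Lemma BW_half m M B t : BW S m M B t -> BW S ((#|~: (M :|: B)| + ~~ t) %/ 2) M B t.
Proof.
elim=> {m M B t} [m M B t nSB|m M B v vMB _ IH|m M B [u uMB] _ IH]; first exact: BW_done.
- rewrite setUCA in IH; apply: BW_leq (BW_breaker vMB IH).
  by have := card_setC_setU1 vMB; rewrite /=; lia.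
- apply: BW_maker => [|v vMB]; first by exists u.
  have := IH v vMB; rewrite -setUA; apply: BW_leq.
  by have := card_setC_setU1 vMB; rewrite /=; lia.
Qed.

Lemma M_moves_le_M'_moves : maker_wins_Bgame S -> M_moves S <= M'_moves S.
Proof. by apply: nat_min_sub => m; apply: MW_move_first. Qed.

Lemma M'_moves_le_half : maker_wins_Bgame S -> M'_moves S <= #|T| %/ 2.
Proof. by case=> m /MW_half; rewrite setU0 setC0 cardsT addn0; apply: nat_min_le. Qed.

Lemma B'_moves_le_B_moves : breaker_wins_Mgame S -> B'_moves S <= B_moves S.
Proof. by apply: nat_min_sub => m; apply: BW_move_first. Qed.

Lemma B_moves_le_half : breaker_wins_Mgame S -> B_moves S <= #|T| %/ 2.
Proof. by case=> m /BW_half; rewrite setU0 setC0 cardsT addn0; apply: nat_min_le. Qed.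

End MakerBreaker.

Section Weaken.
Variables (T : finType) (S S' : {set T} -> Prop).
Hypothesis sub_SS' : forall W, S W -> S' W.

Lemma M_moves_weaken : maker_wins_Mgame S -> M_moves S' <= M_moves S.
Proof. by apply: nat_min_sub => m; apply: MW_weaken. Qed.

Lemma M'_moves_weaken : maker_wins_Bgame S -> M'_moves S' <= M'_moves S.
Proof. by apply: nat_min_sub => m; apply: MW_weaken. Qed.

Lemma B_moves_weaken : breaker_wins_Mgame S' -> B_moves S <= B_moves S'.
Proof. by apply: nat_min_sub => m; apply: BW_weaken. Qed.

Lemma B'_moves_weaken : breaker_wins_Bgame S' -> B'_moves S <= B'_moves S'.
Proof. by apply: nat_min_sub => m; apply: BW_weaken. Qed.

End Weaken.

Lemma disjoint_setU1r (T : finType) (A B : {set T}) x :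
  [disjoint A & x |: B] = (x \notin A) && [disjoint A & B].
Proof. by rewrite -!setI_eq0 setIUr setU_eq0 setI_eq0 disjoint_sym disjoints1. Qed.

Section Pairing.
Variables (T : finType) (X : {set {set T}}).
Hypotheses (trivX : trivIset X) (pairX : forall P, P \in X -> #|P| = 2).
Implicit Types (M B P Q : {set T}).

Definition unclaimed M := [set P in X | [disjoint P & M]].

Definition pairing_invariant M B := {in unclaimed M, forall P, [disjoint P & B]}.

Lemma unclaimedU1 x M : unclaimed (x |: M) = [set P in unclaimed M | x \notin P].
Proof. by apply/setP => P; rewrite !inE disjoint_setU1r andbA andbAC. Qed.

Lemma unclaimed_free M B P x :
  pairing_invariant M B -> P \in unclaimed M -> x \in P -> x \notin M :|: B.
Proof.
move=> inv PU xP; have /setIdP[_ dPM] := PU.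
by rewrite inE negb_or (disjointFr dPM xP) (disjointFr (inv P PU) xP).
Qed.

Lemma unclaimed_through M v R : R \in unclaimed M ->
  exists2 Q, Q \in unclaimed M & {in unclaimed M, forall P, v \in P -> P = Q}.
Proof.
move=> RU; case: (pickP [pred P in unclaimed M | v \in P]) => [Q /andP[QU vQ]|noQ].
  exists Q => // P PU vP; have /setIdP[PX _] := PU; have /setIdP[QX _] := QU.
  by rewrite -(def_pblock trivX PX vP) (def_pblock trivX QX vQ).
by exists R => // P PU vP; move: (noQ P); rewrite /= PU vP.
Qed.

Lemma pairing_reply M B v R :
  pairing_invariant M B -> R \in unclaimed M -> v \notin M :|: B ->
  exists2 x, x \notin M :|: (v |: B) &
    (exists2 Q, Q \in unclaimed M & x \in Q) /\ {in unclaimed M, forall P, v \in P -> x \in P}.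
Proof.
move=> inv RU vMB; have [Q QU Q_v] := unclaimed_through v RU.
have /setIdP[QX _] := QU.
have [x] : exists x, x \in Q :\ v.
  apply/set0Pn; rewrite -card_gt0.
  by have := cardsD1 v Q; rewrite pairX //; case: (v \in Q) => /=; lia.
rewrite !inE => /andP[xv xQ]; exists x; last by split; [exists Q | move=> P /Q_v PQ /PQ ->].
by rewrite setUCA in_setU1 negb_or xv (unclaimed_free inv QU xQ).
Qed.

Lemma unclaimed0 : unclaimed set0 = X.
Proof. by apply/setP => P; rewrite inE -setI_eq0 setI0 eqxx andbT. Qed.

Lemma card_cover_pairs : #|cover X| = 2 * #|X|.
Proof. by rewrite -(eqP trivX) (eq_bigr (fun=> 2) pairX) sum_nat_const mulnC. Qed.

Lemma transversal_sub M :
  unclaimed M = set0 -> exists2 Z : {set T}, Z \subset M & Defs.transversal X Z.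
Proof.
have [-> X0|[x0 _] UM0] := set_0Vmem M.
  by exists set0 => //; split=> [|P]; rewrite -unclaimed0 X0 ?cards0 // inE.
pose f P := odflt x0 [pick y in P :&: M].
have fP : {in X, forall P, f P \in P :&: M}.
  move=> P PX; rewrite /f; case: pickP => // /eq_card0 PM0.
  suff : P \in unclaimed M by rewrite UM0 inE.
  by rewrite inE PX -setI_eq0 -cards_eq0 PM0.
exists (f @: X).
  by apply/subsetP => _ /imsetP[P /fP /setIP[_ fPM] ->].
split=> [|P PX].
  apply: card_in_imset => P Q PX QX fPQ.
  have /setIP[fPP _] := fP P PX; have /setIP[fQQ _] := fP Q QX.
  by rewrite -(def_pblock trivX PX fPP) fPQ (def_pblock trivX QX fQQ).
by apply/set0Pn; exists (f P); rewrite inE imset_f //; case/setIP: (fP P PX).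
Qed.

Section PairingStrategy.
Variable S : {set T} -> Prop.
Hypothesis S_up : forall A A' : {set T}, A \subset A' -> S A -> S A'.

Lemma MW_pairing M B :
  (forall M', M \subset M' -> unclaimed M' = set0 -> S M') ->
  pairing_invariant M B -> MW S #|unclaimed M| M B false.
Proof.
have [n] := ubnP #|unclaimed M|; elim: n M B => // n IH M B ltUn win inv.
have [U0|[R RU]] := set_0Vmem (unclaimed M); first by apply: MW_done; apply: win.
have [r rR] : exists r, r \in R.
  by apply/card_gt0P; have /setIdP[RX _] := RU; rewrite pairX.
apply: MW_breaker => [|v vMB]; first by exists r; apply: unclaimed_free rR.
have [x xMB [[Q QU xQ] v_x]] := pairing_reply inv RU vMB.
have ltU : #|unclaimed (x |: M)| < #|unclaimed M|.
  rewrite unclaimedU1; apply/proper_card/properP; split; first by rewrite setIdE subsetIl.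
  by exists Q; rewrite // inE QU xQ.
apply: MW_leq ltU (MW_maker xMB (IH _ _ (leq_trans ltU _) _ _)) => //.
- by move=> M' /(subset_trans (subsetU1 x M)); apply: win.
- move=> P; rewrite unclaimedU1 inE => /andP[PU xP].
  by rewrite disjoint_setU1r (inv P PU) andbT; apply: contra xP; apply: v_x.
Qed.

Lemma pairing_Bgame : (forall Z, Defs.transversal X Z -> S Z) -> MW S #|X| set0 set0 false.
Proof.
move=> SZ; rewrite -{1}unclaimed0.
apply: MW_pairing => [M' _ /transversal_sub[Z ZM /SZ]|P _]; first exact: S_up.
by rewrite -setI_eq0 setI0.
Qed.

Lemma quasi_pairing_Mgame v : v \notin cover X ->
  (forall Z, Defs.transversal X Z -> S (v |: Z)) -> MW S #|X|.+1 set0 set0 true.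
Proof.
move=> vX SZ; apply: (@MW_maker _ _ _ _ _ v); first by rewrite !inE.
have UX : unclaimed (v |: set0) = X.
  apply/setP => P; rewrite unclaimedU1 unclaimed0 inE.
  by case PX: (P \in X) => //=; apply: contra vX => vP; apply/bigcupP; exists P.
rewrite -{1}UX; apply: MW_pairing => [M' vM' /transversal_sub[Z ZM /SZ]|P _].
  by apply: S_up; rewrite subUset ZM andbT; apply: subset_trans vM'; apply: subsetUl.
by rewrite -setI_eq0 setI0.
Qed.

End PairingStrategy.

End Pairing.

Section Resolving.
Variables (T : finType) (e : rel T).

Lemma k_resolving_sup k (A A' : {set T}) :
  A \subset A' -> k_resolving e k A -> k_resolving e k A'.
Proof. by move=> sAA' resA x y /resA[z zA neq]; exists z; first exact: (subsetP sAA'). Qed.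

Lemma k_resolving_succ k W : k_resolving e k W -> k_resolving e k.+1 W.
Proof.
move=> resW x y /resW[z zW neq_k]; exists z => // eq_k1; apply: neq_k.
by move: eq_k1; rewrite /dist_k; lia.
Qed.

Lemma dist_le_diam x y : dist e x y <= diam e.
Proof. exact: leq_trans (leq_bigmax y) (leq_bigmax x). Qed.

Lemma k_resolving_eq_resolving k : diam e <= k.+1 -> k_resolving e k = resolving e.
Proof.
move=> diam_le; rewrite /k_resolving /resolving; congr resolving_by.
do 2!apply: functional_extensionality => ?.
exact/minn_idPl/(leq_trans (dist_le_diam _ _)).
Qed.

Lemma dim_k_le_M_moves k :
  maker_wins_Mgame (k_resolving e k) -> dim_k e k <= M_moves (k_resolving e k).
Proof.
apply: nat_min_leW => m /MW_card[W resW]; rewrite cards0 => le_Wm.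
by exists #|W| => //; exists W.
Qed.

Lemma pairing_moves k (X : {set {set T}}) :
  pairing_res (k_resolving e k) X -> #|cover X| = 2 * dim_k e k ->
  M_moves (k_resolving e k) = dim_k e k /\ M'_moves (k_resolving e k) = dim_k e k.
Proof.
move=> [[_ [trivX pairX]] resX]; rewrite card_cover_pairs // => cardX.
have MWB := pairing_Bgame trivX pairX (@k_resolving_sup k) resX.
have MWB' : maker_wins_Bgame (k_resolving e k) by exists #|X|.
have le_dim_M := dim_k_le_M_moves (ex_intro _ _ (MW_move_first MWB)).
have le_M_M' := M_moves_le_M'_moves MWB'.
have le_M'_X : M'_moves (k_resolving e k) <= #|X| := nat_min_le MWB.
lia.
Qed.

Lemma quasi_pairing_N_moves k (X : {set {set T}}) :
  quasi_pairing_res (k_resolving e k) X -> #|cover X| = 2 * (dim_k e k - 1) ->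
  N_moves (k_resolving e k) = dim_k e k.
Proof.
move=> [[X_gt0 [trivX pairX]] _ [v vX resvX]]; rewrite card_cover_pairs // => cardX.
have MWM := quasi_pairing_Mgame trivX pairX (@k_resolving_sup k) vX resvX.
have le_dim_N : dim_k e k <= N_moves (k_resolving e k) :=
  dim_k_le_M_moves (ex_intro _ _ MWM).
have le_N_X : N_moves (k_resolving e k) <= #|X|.+1 := nat_min_le MWM.
lia.
Qed.

End Resolving.

Theorem mainTheorem8 (T : finType) (e : rel T) (k : nat) :
  symmetric e -> irreflexive e -> (forall x y : T, connect e x y) ->
  1 < #|T| -> 0 < k ->
  (* (a) *)
  (outcome_M (k_resolving e k) ->
     [/\ dim_k e k <= M_moves (k_resolving e k),
         M_moves (k_resolving e k) <= M'_moves (k_resolving e k),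
         M'_moves (k_resolving e k) <= #|T| %/ 2,
         M_moves (k_resolving e k.+1) <= M_moves (k_resolving e k) &
         M'_moves (k_resolving e k.+1) <= M'_moves (k_resolving e k)]) /\
  (* (b) *)
  (outcome_B (k_resolving e k) ->
     [/\ B'_moves (k_resolving e k) <= B_moves (k_resolving e k),
         B_moves (k_resolving e k) <= #|T| %/ 2 &
         (1 < k ->
            B_moves (k_resolving e k.-1) <= B_moves (k_resolving e k) /\
            B'_moves (k_resolving e k.-1) <= B'_moves (k_resolving e k))]) /\
  (* (c) *)
  ((diam e = 1 \/ diam e = 2 \/ (diam e).-1 <= k) ->
     (outcome_M (resolving e) ->
        M_moves (k_resolving e k) = M_moves (resolving e) /\
        M'_moves (k_resolving e k) = M'_moves (resolving e)) /\
     (outcome_B (resolving e) ->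
        B_moves (k_resolving e k) = B_moves (resolving e) /\
        B'_moves (k_resolving e k) = B'_moves (resolving e))) /\
  (* (d) *)
  (forall X : {set {set T}}, pairing_res (k_resolving e k) X ->
     #|cover X| = 2 * dim_k e k ->
     M_moves (k_resolving e k) = dim_k e k /\
     M'_moves (k_resolving e k) = dim_k e k) /\
  (* (e) *)
  (forall X : {set {set T}}, quasi_pairing_res (k_resolving e k) X ->
     #|cover X| = 2 * (dim_k e k - 1) ->
     outcome_N (k_resolving e k) ->
     N_moves (k_resolving e k) = dim_k e k).
Proof.
move=> _ _ _ _ k_gt0; split; [|split; [|split; [|split]]].
- case=> MWM MWB; split.
  + exact: dim_k_le_M_moves.
  + exact: M_moves_le_M'_moves.
  + exact: M'_moves_le_half.
  + by apply: M_moves_weaken MWM => W; apply: k_resolving_succ.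
  + by apply: M'_moves_weaken MWB => W; apply: k_resolving_succ.
- case=> BWM BWB; split=> [||k_gt1]; first exact: B'_moves_le_B_moves.
    exact: B_moves_le_half.
  have res_pred W : k_resolving e k.-1 W -> k_resolving e k W.
    by move/k_resolving_succ; rewrite prednK.
  by split; [apply: B_moves_weaken BWM | apply: B'_moves_weaken BWB].
- by move=> diam_small; rewrite k_resolving_eq_resolving //; lia.
- exact: pairing_moves.
- by move=> X quasiX cardX _; apply: quasi_pairing_N_moves quasiX cardX.
Qed.
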